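(* There is a single algorithm such that for every code $f$ of a Suslin set $P[f]\subseteq X$, the characteristic function of $P[f]$ is computable in $\mathbf S$ and $f$ via this algorithm; i.e. there is an index $e$ with $\{e\}(\mathbf S,f,x)=1$ if $x\in P[f]$ and $=0$ if $x\notin P[f]$, for all codes $f$ and all $x\in X$.
   Context: The Suslin functional $\mathbf S$ is the type-2 functional with $\mathbf S(g)=0$ if $\forall f\in\mathbb N^{\mathbb N}\exists n\,(g(\bar f(n))=0)$ and $\mathbf S(g)=1$ if $\exists f\in\mathbb N^{\mathbb N}\forall n\,(g(\bar f(n))>0)$, where $\bar f(n)=\langle f(0),\dots,f(n-1)\rangle$. Computability is Kleene computability (S1–S9). Suslin sets and their codes: $\mathrm{SEQ}$ finite sequences of naturals; a Suslin scheme is $s\mapsto P_s\subseteq X$ on $\mathrm{SEQ}$, $\mathbf A(\mathbf P)=\bigcup_{f}\bigcap_n P_{\bar f(n)}$; $\Sigma_0$ clopen sets, $\Sigma_\alpha$ ($\alpha>0$) sets $\mathbf A(\mathbf P)$ with each $P_s\in\Pi_\beta$, $\beta<\alpha$; $\Pi_\alpha$ complements; Suslin sets are the members of $\bigcup_{\alpha<\omega_1}\Sigma_\alpha$. A code is a function $f\in\mathbb N^{\mathbb N}$ coding a well-founded labelled tree (leaves code clopen sets, inner nodes denote complement or application of $\mathbf A$ to the scheme of sets coded by children indexed by $\mathrm{SEQ}$); $P[f]$ is the coded set. $X$ is a product of copies of $\mathbb N^{\mathbb N}$, $\{0,1\}^{\mathbb N}$, $\mathbb N$. *)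

From mathcomp Require Import all_boot.
From Stdlib Require Import ClassicalEpsilon.
Set Implicit Arguments. Unset Strict Implicit. Unset Printing Implicit Defensive.

Definition seqcode (s : seq nat) : nat := CodeSeq.code s.
Definition sequncode (n : nat) : seq nat := CodeSeq.decode n.

Definition fbar (f : nat -> nat) (n : nat) : seq nat := mkseq f n.

Definition SuslinS (g : nat -> nat) : nat :=
  if excluded_middle_informative
       (forall f : nat -> nat, exists n, g (seqcode (fbar f n)) = 0)
  then 0 else 1.

Inductive obj : Type :=
| O0 of nat
| O1 of (nat -> nat)
| O2 of ((nat -> nat) -> nat).

Inductive kind := KN | KBaire | KCantor.
Definition space := seq kind.

Definition in_kind (k : kind) (o : obj) : Prop :=
  match k, o with
  | KN, O0 _ => True
  | KBaire, O1 _ => True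
  | KCantor, O1 g => forall n, g n <= 1
  | _, _ => False
  end.

Fixpoint in_space (X : space) (x : seq obj) : Prop :=
  match X, x with
  | [::], [::] => True
  | k :: X', o :: x' => in_kind k o /\ in_space X' x'
  | _, _ => False
  end.

Inductive scheme :=
| Sc1
| Sc2 of nat
| Sc3
| Sc4 of nat & nat
| Sc5 of nat & nat
| Sc6 of nat & nat
| Sc7
| Sc8 of nat
| Sc9 of nat.

Definition decode_index (e : nat) : option scheme :=
  match sequncode e with
  | [:: 0] => Some Sc1
  | [:: 1; q] => Some (Sc2 q)
  | [:: 2] => Some Sc3
  | [:: 3; e1; e2] => Some (Sc4 e1 e2)
  | [:: 4; e1; e2] => Some (Sc5 e1 e2)
  | [:: 5; k; e1] => Some (Sc6 k e1)
  | [:: 6] => Some Sc7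
  | [:: 7; e1] => Some (Sc8 e1)
  | [:: 8; m] => Some (Sc9 m)
  | _ => None
  end.

Definition swap_at (k : nat) (xs : seq obj) : seq obj :=
  take k xs ++ (nth (O0 0) xs k.+1 :: nth (O0 0) xs k :: drop k.+2 xs).

(* Comp e xs n  :<->  {e}(xs) = n  (Kleene's inductive definition) *)
Inductive Comp : nat -> seq obj -> nat -> Prop :=
| C1 e n xs : decode_index e = Some Sc1 -> Comp e (O0 n :: xs) n.+1
| C2 e q xs : decode_index e = Some (Sc2 q) -> Comp e xs q
| C3 e n xs : decode_index e = Some Sc3 -> Comp e (O0 n :: xs) n
| C4 e e1 e2 xs m n : decode_index e = Some (Sc4 e1 e2) ->
    Comp e2 xs m -> Comp e1 (O0 m :: xs) n -> Comp e xs n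
| C5a e e1 e2 xs n : decode_index e = Some (Sc5 e1 e2) ->
    Comp e1 xs n -> Comp e (O0 0 :: xs) n
| C5b e e1 e2 xs m r n : decode_index e = Some (Sc5 e1 e2) ->
    Comp e (O0 m :: xs) r -> Comp e2 (O0 r :: O0 m :: xs) n ->
    Comp e (O0 m.+1 :: xs) n
| C6 e k e1 xs n : decode_index e = Some (Sc6 k e1) -> k.+1 < size xs ->
    Comp e1 (swap_at k xs) n -> Comp e xs n
| C7 e f m xs : decode_index e = Some Sc7 -> Comp e (O1 f :: O0 m :: xs) (f m)
| C8 e e1 F xs (g : nat -> nat) : decode_index e = Some (Sc8 e1) ->
    (forall m, Comp e1 (O2 F :: O0 m :: xs) (g m)) ->
    Comp e (O2 F :: xs) (F g)
| C9 e m a ys xs n : decode_index e = Some (Sc9 m) -> size ys = m ->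
    Comp a ys n -> Comp e (O0 a :: ys ++ xs) n.

(* Leaves code basic clopen sets: the leaf number c decodes to a list of
   constraints, the i-th one (a finite sequence s) restricting coordinate i:
   for an N-coordinate, s = [::] (no constraint) or x_i = head s;
   for a function coordinate, s is an initial segment of x_i. *)
Definition basic_set (c : nat) (x : seq obj) : Prop :=
  let cs := map sequncode (sequncode c) in
  forall i, i < size cs -> i < size x ->
    let s := nth [::] cs i in
    match nth (O0 0) x i with
    | O0 n => s = [::] \/ n = head 0 s
    | O1 g => s = mkseq g (size s)
    | O2 _ => False
    end.

Definition Aop (P : seq nat -> seq obj -> Prop) (x : seq obj) : Prop :=
  exists g : nat -> nat, forall n, P (fbar g n) x.

(* Node s of the tree coded by f carries label f <s>:
     f <s> = 3c     : leaf, the basic clopen set coded by c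
     f <s> = 3c + 1 : complement of the set coded at s ++ [0]
     f <s> = 3c + 2 : A applied to the scheme t |-> set coded at s ++ [<t>].
   Interp f s Q : the (well-founded) subtree of f at s codes the set Q.
   f is a code iff Interp f [::] Q for some Q, and then P[f] = Q. *)
Inductive Interp (f : nat -> nat) : seq nat -> (seq obj -> Prop) -> Prop :=
| I_leaf s : f (seqcode s) %% 3 = 0 ->
    Interp f s (basic_set (f (seqcode s) %/ 3))
| I_compl s Q : f (seqcode s) %% 3 = 1 ->
    Interp f (rcons s 0) Q -> Interp f s (fun x => ~ Q x)
| I_A s (P : seq nat -> seq obj -> Prop) : f (seqcode s) %% 3 = 2 ->
    (forall t, Interp f (rcons s (seqcode t)) (P t)) -> Interp f s (Aop P).

Definition is_code (f : nat -> nat) : Prop := exists Q, Interp f [::] Q.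

From mathcomp Require Import all_boot zify.
From Stdlib Require Import ClassicalEpsilon Classical_Prop.
Set Implicit Arguments. Unset Strict Implicit. Unset Printing Implicit Defensive.

(* By the recursion theorem we build a single index q such that, for every
   code f, every node s of the tree of f and every point x,
       {q}(<s>, |s| + sum s, S, f, x) = characteristic function at x of the
                                      set coded at s.
   The program reads the label f<s>: at a leaf it decides the basic clopen set
   by primitive recursion; at a complement node it calls itself on s ++ [0]
   and negates; at an A-node it applies S (scheme S8) to m |-> {q}(<s ++ [m]>,
   ...), which decides the operation A ([suslin_chi]). *)

Definition iSucc : nat := seqcode [:: 0].
Definition iConst (q : nat) : nat := seqcode [:: 1; q].
Definition iProj : nat := seqcode [:: 2].
Definition iComp (e1 e2 : nat) : nat := seqcode [:: 3; e1; e2].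
Definition iRec (e1 e2 : nat) : nat := seqcode [:: 4; e1; e2].
Definition iSwap (k e1 : nat) : nat := seqcode [:: 5; k; e1].
Definition iApp1 : nat := seqcode [:: 6].
Definition iApp2 (e1 : nat) : nat := seqcode [:: 7; e1].
Definition iUniv (m : nat) : nat := seqcode [:: 8; m].

Lemma decode_seqcode (l : seq nat) : sequncode (seqcode l) = l.
Proof. exact: CodeSeq.codeK. Qed.

Ltac decode_scheme := rewrite /decode_index decode_seqcode.

Lemma comp_succ n xs : Comp iSucc (O0 n :: xs) n.+1.
Proof. by apply: C1; decode_scheme. Qed.

Lemma comp_const q xs : Comp (iConst q) xs q.
Proof. by apply: C2; decode_scheme. Qed.

Lemma comp_proj n xs : Comp iProj (O0 n :: xs) n.
Proof. by apply: C3; decode_scheme. Qed.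

Lemma comp_comp e1 e2 xs m n :
  Comp e2 xs m -> Comp e1 (O0 m :: xs) n -> Comp (iComp e1 e2) xs n.
Proof. by apply: C4; decode_scheme. Qed.

Lemma comp_app1 g m xs : Comp iApp1 (O1 g :: O0 m :: xs) (g m).
Proof. by apply: C7; decode_scheme. Qed.

Lemma comp_app2 e1 F xs (g : nat -> nat) :
  (forall m, Comp e1 (O2 F :: O0 m :: xs) (g m)) -> Comp (iApp2 e1) (O2 F :: xs) (F g).
Proof. by apply: C8; decode_scheme. Qed.

Lemma comp_univ m a ys xs n :
  size ys = m -> Comp a ys n -> Comp (iUniv m) (O0 a :: ys ++ xs) n.
Proof. by apply: C9; decode_scheme. Qed.

Lemma comp_univ_all m a ys n : size ys = m -> Comp a ys n -> Comp (iUniv m) (O0 a :: ys) n.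
Proof. by move=> ys_m Ca; rewrite -[ys]cats0; exact: comp_univ. Qed.

Lemma comp_rec e1 e2 xs (R : nat -> nat) N :
  Comp e1 xs (R 0) ->
  (forall m, m < N -> Comp e2 (O0 (R m) :: O0 m :: xs) (R m.+1)) ->
  forall m, m <= N -> Comp (iRec e1 e2) (O0 m :: xs) (R m).
Proof.
move=> R0 RS; elim=> [|m IHm] le_mN; first by apply: C5a; first by decode_scheme.
by apply: C5b (IHm (ltnW le_mN)) (RS m le_mN); decode_scheme.
Qed.

Lemma swap_at_cat pre a b post :
  swap_at (size pre) (pre ++ a :: b :: post) = pre ++ b :: a :: post.
Proof. by elim: pre => [|x pre]; rewrite /swap_at /= ?drop0 // => ->. Qed.

Fixpoint imove (i e : nat) : nat := if i is i'.+1 then iSwap i' (imove i' e) else e.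

Lemma comp_imove pre a post e n :
  Comp e (a :: pre ++ post) n -> Comp (imove (size pre) e) (pre ++ a :: post) n.
Proof.
elim/last_ind: pre a post e n => [//|pre p IHpre] a post e n Ce.
rewrite size_rcons /=; apply: C6; first by decode_scheme.
  by rewrite size_cat /= size_rcons; lia.
rewrite -cats1 -catA /= swap_at_cat; apply: IHpre.
by rewrite -cats1 -catA in Ce.
Qed.

Lemma comp_imove_nth i xs e n : i < size xs ->
  Comp e (nth (O0 0) xs i :: take i xs ++ drop i.+1 xs) n -> Comp (imove i e) xs n.
Proof.
move=> lt_i Ce; rewrite -(cat_take_drop i xs) (drop_nth (O0 0)) //.
by have := comp_imove Ce; rewrite size_take lt_i.
Qed.

Definition irot (p k e : nat) : nat := iter k (imove (p + k - 1)) e.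

Lemma comp_irot P T R e n :
  Comp e (T ++ P ++ R) n -> Comp (irot (size P) (size T) e) (P ++ T ++ R) n.
Proof.
move=> Ce.
suff rot_j j : j <= size T ->
  Comp (iter j (imove (size P + size T - 1)) e) (drop j T ++ P ++ take j T ++ R) n.
  by have := rot_j _ (leqnn _); rewrite drop_size take_size.
elim: j => [|j IHj] le_jT; first by rewrite drop0 take0.
rewrite iterS (take_nth (O0 0)) // -cats1.
have sz : size (drop j.+1 T ++ P ++ take j T) = size P + size T - 1.
  by rewrite !size_cat size_drop size_take le_jT; lia.
have -> : drop j.+1 T ++ P ++ (take j T ++ [:: nth (O0 0) T j]) ++ R =
          (drop j.+1 T ++ P ++ take j T) ++ nth (O0 0) T j :: R by rewrite -!catA.
rewrite -{1}sz; apply: comp_imove.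
by rewrite -!catA -cat_cons -(drop_nth (O0 0)) //; apply: IHj; lia.
Qed.

(* A small language of primitive recursive expressions over an environment
   [renv] of arguments, addressed by de Bruijn levels (level 0 is the last
   argument of the computation, since [renv] lists the arguments in reverse).
   [NLet t u] evaluates u with the value of t pushed as a new level, and
   [NRec t0 ts tn] is primitive recursion, ts seeing the counter and the
   previous value as the two newest levels. *)
Inductive nexp :=
| NV of nat | NC of nat | NS of nexp | NApp of nat & nexp
| NLet of nexp & nexp | NRec of nexp & nexp & nexp.

(* Values of levels; out-of-type lookups default to 0, but [wf] excludes them. *)
Definition num_at (renv : seq obj) (l : nat) : nat :=
  if nth (O0 0) renv l is O0 n then n else 0.
Definition fun_at (renv : seq obj) (l : nat) : nat -> nat :=
  if nth (O0 0) renv l is O1 g then g else fun _ => 0.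

Fixpoint nrec (a : nat) (F : nat -> nat -> nat) (m : nat) : nat :=
  if m is m'.+1 then F m' (nrec a F m') else a.

Fixpoint eval (renv : seq obj) (t : nexp) {struct t} : nat :=
  match t with
  | NV l => num_at renv l
  | NC q => q
  | NS t => (eval renv t).+1
  | NApp l t => fun_at renv l (eval renv t)
  | NLet t u => eval (rcons renv (O0 (eval renv t))) u
  | NRec t0 ts tn => nrec (eval renv t0)
       (fun m r => eval (rcons (rcons renv (O0 m)) (O0 r)) ts) (eval renv tn)
  end.

Definition natAt (renv : seq obj) (l k : nat) : Prop := nth (O1 (fun _ => 0)) renv l = O0 k.
Definition funAt (renv : seq obj) (l : nat) (g : nat -> nat) : Prop := nth (O0 0) renv l = O1 g.

Lemma natAt_lt renv l k : natAt renv l k -> l < size renv.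
Proof. by rewrite /natAt; case: ltnP => // ge_l; rewrite nth_default. Qed.

Lemma funAt_lt renv l g : funAt renv l g -> l < size renv.
Proof. by rewrite /funAt; case: ltnP => // ge_l; rewrite nth_default. Qed.

Fixpoint wf (renv : seq obj) (t : nexp) {struct t} : Prop :=
  match t with
  | NV l => exists n, natAt renv l n
  | NC q => True
  | NS t => wf renv t
  | NApp l t => (exists g, funAt renv l g) /\ wf renv t
  | NLet t u => wf renv t /\ wf (rcons renv (O0 (eval renv t))) u
  | NRec t0 ts tn => wf renv t0 /\ wf renv tn /\
       (forall m, m < eval renv tn -> wf (rcons (rcons renv (O0 m)) (O0 (nrec (eval renv t0)
       (fun m r => eval (rcons (rcons renv (O0 m)) (O0 r)) ts) m))) ts)
  end.

(* The compiler into Kleene indices; n is the number of arguments. *)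
Fixpoint compile (n : nat) (t : nexp) : nat :=
  match t with
  | NV l => imove (n.-1 - l) iProj
  | NC q => iConst q
  | NS t => iComp iSucc (compile n t)
  | NApp l t => iComp (imove (n - l) iApp1) (compile n t)
  | NLet t u => iComp (compile n.+1 u) (compile n t)
  | NRec t0 ts tn => iComp (iRec (compile n t0) (compile n.+2 ts)) (compile n tn)
  end.

Lemma compile_correct t renv :
  wf renv t -> Comp (compile (size renv) t) (rev renv) (eval renv t).
Proof.
elim: t renv => [l|q|t IH|l t IH|t IHt u IHu|t0 IH0 ts IHs tn IHn] renv /=.
- case=> k renv_l; have lt_l := natAt_lt renv_l.
  apply: comp_imove_nth; first by rewrite size_rev; lia.
  rewrite nth_rev; last by lia.
  have -> : size renv - ((size renv).-1 - l).+1 = l by lia.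
  rewrite (set_nth_default (O1 (fun _ => 0))) // renv_l /num_at.
  rewrite (set_nth_default (O1 (fun _ => 0))) // renv_l.
  exact: comp_proj.
- by move=> _; exact: comp_const.
- by move=> wf_t; apply: comp_comp (IH _ wf_t) _; exact: comp_succ.
- case=> -[g renv_l] wf_t; apply: comp_comp (IH _ wf_t) _.
  have lt_l := funAt_lt renv_l.
  apply: comp_imove_nth => /=; first by rewrite size_rev; lia.
  have -> : size renv - l = (size renv - l.+1).+1 by lia.
  rewrite /= nth_rev; last by lia.
  have -> : size renv - (size renv - l.+1).+1 = l by lia.
  by rewrite renv_l /fun_at renv_l; exact: comp_app1.
- case=> wf_t wf_u; apply: comp_comp (IHt _ wf_t) _.
  by have := IHu _ wf_u; rewrite size_rcons rev_rcons.
- case=> wf0 [wfn wfs]; apply: comp_comp (IHn _ wfn) _.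
  apply: (comp_rec (N := eval renv tn)) => //; first exact: IH0.
  by move=> m lt_m; have := IHs _ (wfs m lt_m); rewrite !size_rcons !rev_rcons.
Qed.

(* [evals renv t v]: t is well-typed in renv and has value v.  The rules below
   let us reason about expressions compositionally, never unfolding [eval]. *)
Definition evals (renv : seq obj) (t : nexp) (v : nat) : Prop :=
  wf renv t /\ eval renv t = v.

Lemma evals_comp renv t v xs n :
  evals renv t v -> xs = rev renv -> size renv = n -> Comp (compile n t) xs v.
Proof. by case=> wf_t <- -> <-; exact: compile_correct. Qed.

Lemma evals_conv renv t v w : v = w -> evals renv t v -> evals renv t w.
Proof. by move=> ->. Qed.

Lemma evals_var renv l k : natAt renv l k -> evals renv (NV l) k.
Proof.
move=> renv_l; split; first by exists k.
by rewrite /= /num_at (set_nth_default (O1 (fun _ => 0))) ?(natAt_lt renv_l) // renv_l.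
Qed.

Lemma evals_const renv q : evals renv (NC q) q.
Proof. by []. Qed.

Lemma evals_succ renv t v : evals renv t v -> evals renv (NS t) v.+1.
Proof. by case=> wf_t ev_t; split => //=; rewrite ev_t. Qed.

Lemma evals_app renv l g t v : funAt renv l g -> evals renv t v -> evals renv (NApp l t) (g v).
Proof.
by move=> renv_l [wf_t ev_t]; split=> /=; [split=> //; exists g | rewrite /fun_at renv_l ev_t].
Qed.

Lemma evals_let renv t u v w :
  evals renv t v -> evals (rcons renv (O0 v)) u w -> evals renv (NLet t u) w.
Proof. by case=> wf_t ev_t [wf_u ev_u]; split => /=; rewrite ev_t. Qed.

Definition push2 (s : seq obj) (m r : nat) : seq obj := rcons (rcons s (O0 m)) (O0 r).

Lemma evals_rec renv t0 ts tn a N (F : nat -> nat -> nat) :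
  evals renv t0 a -> evals renv tn N ->
  (forall m r, m < N -> evals (push2 renv m r) ts (F m r)) ->
  evals renv (NRec t0 ts tn) (nrec a F N).
Proof.
case=> wf0 ev0 [wfn evn] evs.
set G := fun m r => eval (push2 renv m r) ts.
have G_F m : m <= N -> nrec (eval renv t0) G m = nrec a F m.
  elim: m => [|m IHm] le_mN //=.
  by rewrite IHm ?(ltnW le_mN) //; case: (evs m (nrec a F m) le_mN).
split => /=; last by rewrite evn -/G G_F.
split=> //; split=> // m; rewrite evn => lt_mN; rewrite -/G G_F ?(ltnW lt_mN) //.
by case: (evs m (nrec a F m) lt_mN).
Qed.

Lemma nth_rcons_lt (T : Type) (x0 : T) s v i : i < size s -> nth x0 (rcons s v) i = nth x0 s i.
Proof. by move=> lt_i; rewrite nth_rcons lt_i. Qed.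

Lemma natAt_rcons s l k v : natAt s l k -> natAt (rcons s v) l k.
Proof. by move=> s_l; rewrite /natAt nth_rcons (natAt_lt s_l). Qed.

Lemma natAt_last s n k k' : size s = n -> k = k' -> natAt (rcons s (O0 k)) n k'.
Proof. by move=> <- <-; rewrite /natAt nth_rcons ltnn eqxx. Qed.

Lemma funAt_rcons s l g v : funAt s l g -> funAt (rcons s v) l g.
Proof. by move=> s_l; rewrite /funAt nth_rcons (funAt_lt s_l). Qed.

Ltac size_tac := rewrite /push2 ?size_rcons; lia.
Ltac lookup_tac := rewrite ?/push2;
  lazymatch goal with
  | |- natAt (rcons _ _) _ _ =>
      first [ apply: natAt_last; [rewrite ?size_rcons; lia | reflexivity]
            | apply: natAt_rcons; lookup_tac ]
  | |- funAt (rcons _ _) _ _ => apply: funAt_rcons; lookup_tac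
  | |- _ => eassumption
  end.
Ltac side := first [ size_tac | lookup_tac ].

(* A library of arithmetic expressions.  Each takes the current number n of
   levels (new levels are created above n) and the levels of its operands. *)
Definition addE n i j := NRec (NV i) (NS (NV n.+1)) (NV j).
Definition mulE n i j := NRec (NC 0) (addE n.+2 n.+1 i) (NV j).
Definition pow2E n i := NRec (NC 1) (addE n.+2 n.+1 n.+1) (NV i).
Definition predE n i := NRec (NC 0) (NV n) (NV i).
Definition subE n i j := NRec (NV i) (predE n.+2 n.+1) (NV j).
Definition case3E n j a b c := NRec (NC a) (NRec (NC b) (NC c) (NV n)) (NV j).

Lemma evals_add renv n i j a b : size renv = n -> natAt renv i a -> natAt renv j b ->
  evals renv (addE n i j) (a + b).
Proof.
move=> size_renv renv_i renv_j; have -> : a + b = nrec a (fun _ r => r.+1) b.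
  by elim: b {renv_j} => [|b IHb] /=; [rewrite addn0 | rewrite -IHb addnS].
apply: evals_rec; [exact: evals_var | exact: evals_var |].
by move=> m r _; apply/evals_succ/evals_var; side.
Qed.

Lemma evals_mul renv n i j a b : size renv = n -> natAt renv i a -> natAt renv j b ->
  evals renv (mulE n i j) (a * b).
Proof.
move=> size_renv renv_i renv_j; have -> : a * b = nrec 0 (fun _ r => r + a) b.
  by elim: b {renv_j} => /= [|b <-]; rewrite ?muln0 // mulnS addnC.
apply: evals_rec; [exact: evals_const | exact: evals_var |].
by move=> m r _; apply: evals_add; side.
Qed.

Lemma evals_pow2 renv n i a : size renv = n -> natAt renv i a -> evals renv (pow2E n i) (2 ^ a).
Proof.
move=> size_renv renv_i; have -> : 2 ^ a = nrec 1 (fun _ r => r + r) a.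
  by elim: a {renv_i} => //= a <-; rewrite expnS mul2n addnn.
apply: evals_rec; [exact: evals_const | exact: evals_var |].
by move=> m r _; apply: evals_add; side.
Qed.

Lemma evals_pred renv n i a : size renv = n -> natAt renv i a -> evals renv (predE n i) a.-1.
Proof.
move=> size_renv renv_i; have -> : a.-1 = nrec 0 (fun m _ => m) a by case: a {renv_i}.
apply: evals_rec; [exact: evals_const | exact: evals_var |].
by move=> m r _; apply: evals_var; side.
Qed.

Lemma evals_sub renv n i j a b : size renv = n -> natAt renv i a -> natAt renv j b ->
  evals renv (subE n i j) (a - b).
Proof.
move=> size_renv renv_i renv_j; have -> : a - b = nrec a (fun _ r => r.-1) b.
  by elim: b {renv_j} => /= [|b <-]; rewrite ?subn0 ?subnS.
apply: evals_rec; [exact: evals_var | exact: evals_var |].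
by move=> m r _; apply: evals_pred; side.
Qed.

Definition case3 (k a b c : nat) : nat := if k is k'.+1 then (if k' is 0 then b else c) else a.

Lemma evals_case3 renv n j k a b c : size renv = n -> natAt renv j k ->
  evals renv (case3E n j a b c) (case3 k a b c).
Proof.
move=> size_renv renv_j; have -> : case3 k a b c = nrec a (fun m _ => nrec b (fun _ _ => c) m) k.
  by case: k {renv_j} => // -[].
apply: evals_rec; [exact: evals_const | exact: evals_var |] => m r _.
by apply: evals_rec; [exact: evals_const | apply: evals_var; side | by []].
Qed.

Definition sgE n j := case3E n j 0 1 1.
Definition iszeroE n j := case3E n j 1 0 0.
Definition eqbE n i j :=
  NLet (subE n i j) (NLet (subE n.+1 j i) (NLet (addE n.+2 n n.+1) (iszeroE n.+3 n.+2))).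
(* [bsumE n j body] sums body over a counter m < k (k at level j); the counter
   is at level n, and level n.+1 is used for the partial sum. *)
Definition bsumE n j body := NRec (NC 0) (NLet body (addE n.+3 n.+1 n.+2)) (NV j).
Definition mod3E n i := NRec (NC 0) (case3E n.+2 n.+1 1 2 0) (NV i).
Definition div3E n i := NRec (NC 0)
  (NLet (mod3E n.+2 n) (NLet (case3E n.+3 n.+2 0 0 1) (addE n.+4 n.+1 n.+3))) (NV i).

Lemma evals_sg renv n j k : size renv = n -> natAt renv j k -> evals renv (sgE n j) (0 < k).
Proof.
move=> size_renv renv_j; apply: evals_conv; last exact: evals_case3 size_renv renv_j.
by case: k {renv_j} => // -[].
Qed.

Lemma evals_iszero renv n j k : size renv = n -> natAt renv j k ->
  evals renv (iszeroE n j) (k == 0).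
Proof.
move=> size_renv renv_j; apply: evals_conv; last exact: evals_case3 size_renv renv_j.
by case: k {renv_j} => // -[].
Qed.

Lemma evals_eqb renv n i j a b : size renv = n -> natAt renv i a -> natAt renv j b ->
  evals renv (eqbE n i j) (a == b).
Proof.
move=> size_renv renv_i renv_j.
apply: evals_let; first exact: evals_sub size_renv renv_i renv_j.
apply: evals_let; first by apply: (evals_sub (a := b) (b := a)); side.
apply: evals_let; first by apply: evals_add; side.
apply: evals_conv; last by apply: evals_iszero; side.
by rewrite addn_eq0 !subn_eq0 -eqn_leq.
Qed.

Lemma evals_bsum renv n j k body (G : nat -> nat) : size renv = n -> natAt renv j k ->
  (forall m r, m < k -> evals (push2 renv m r) body (G m)) ->
  evals renv (bsumE n j body) (\sum_(m < k) G m).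
Proof.
move=> size_renv renv_j ev_body.
have -> : \sum_(m < k) G m = nrec 0 (fun m r => r + G m) k.
  by elim: k {renv_j ev_body} => [|k IHk]; rewrite ?big_ord0 // big_ord_recr /= IHk.
apply: evals_rec; [exact: evals_const | exact: evals_var |] => m r lt_mk.
by apply: evals_let; [exact: ev_body | apply: evals_add; side].
Qed.

Lemma evals_mod3 renv n i k : size renv = n -> natAt renv i k -> evals renv (mod3E n i) (k %% 3).
Proof.
move=> size_renv renv_i; have -> : k %% 3 = nrec 0 (fun _ r => case3 r 1 2 0) k.
  elim: k {renv_i} => [//|k /= <-].
  by case E: (k %% 3) => [|[|[|y]]] /=; lia.
apply: evals_rec; [exact: evals_const | exact: evals_var |].
by move=> m r _; apply: evals_case3; side.
Qed.

Lemma evals_div3 renv n i k : size renv = n -> natAt renv i k -> evals renv (div3E n i) (k %/ 3).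
Proof.
move=> size_renv renv_i; have -> : k %/ 3 = nrec 0 (fun m r => r + case3 (m %% 3) 0 0 1) k.
  elim: k {renv_i} => [//|k /= <-].
  by case E: (k %% 3) => [|[|[|y]]] /=; lia.
apply: evals_rec; [exact: evals_const | exact: evals_var |] => m r _.
apply: evals_let; first by apply: evals_mod3; side.
apply: evals_let; first by apply: evals_case3; side.
by apply: evals_add; side.
Qed.

(* Arithmetic of the sequence code: <a_0, ..., a_(k-1)> = sum_i 2^(i + a_0 + ... + a_i),
   i.e. code (a :: s) = 2^a * (2 * code s + 1). *)
Local Notation code := CodeSeq.code.
Local Notation decode := CodeSeq.decode.

(* The weight |s| + sum s of s governs appending: <s ++ t> = <s> + 2^(weight s) * <t>. *)
Definition weight (s : seq nat) : nat := size s + sumn s.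

Lemma code_cat s t : code (s ++ t) = code s + 2 ^ weight s * code t.
Proof.
rewrite /weight; elim: s => [|a s IHs] /=; first by rewrite mul1n.
rewrite IHs -!mul2n.
have -> : (size s).+1 + (a + sumn s) = a + (size s + sumn s).+1 by lia.
rewrite [2 ^ (a + _)]expnD expnS; set A := 2 ^ a; set P := 2 ^ (size s + sumn s); nia.
Qed.

Lemma code_rcons s k : code (rcons s k) = code s + 2 ^ weight s * 2 ^ k.
Proof. by rewrite -cats1 code_cat /= muln1. Qed.

Lemma weight_rcons s k : weight (rcons s k) = (weight s + k).+1.
Proof. by rewrite /weight size_rcons -cats1 sumn_cat /=; lia. Qed.

Lemma code_eq0 L : (code L == 0) = (L == [::]).
Proof.
apply/eqP/eqP => [|-> //]; case: L => //= a s /eqP.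
by rewrite muln_eq0 expn_eq0 /=; case: (code s).
Qed.

Lemma size_le_code s : size s <= code s.
Proof.
elim: s => //= a s IHs; apply: leq_trans (_ : (code s).*2.+1 <= _); first by lia.
by rewrite leq_pmull // expn_gt0.
Qed.

(* Head and tail of a code are definable by bounded sums over the graph of
   cons, which is all that a primitive recursive expression can do with it. *)
Definition cons_code (a u : nat) : nat := 2 ^ a * (u + u).+1.
Definition is_cons_code (a u c : nat) : bool := cons_code a u == c.
Definition headc (c : nat) : nat := \sum_(a < c) a * (0 < \sum_(u < c) is_cons_code a u c).
Definition tailc (c : nat) : nat := \sum_(u < c) u * (0 < \sum_(a < c) is_cons_code a u c).

Lemma code_cons a s : code (a :: s) = cons_code a (code s).
Proof. by rewrite /= /cons_code addnn. Qed.

(* Cons is injective on codes, and its arguments lie below its value, so that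
   bounded sums below c find them. *)
Lemma cons_code_inj a u a' u' : cons_code a u = cons_code a' u' -> a = a' /\ u = u'.
Proof.
rewrite -(CodeSeq.decodeK u) -(CodeSeq.decodeK u') -!code_cons => /(congr1 decode).
by rewrite !CodeSeq.codeK => -[-> ->].
Qed.

Lemma cons_code_gt a u : a < cons_code a u /\ u < cons_code a u.
Proof.
split; last first.
  rewrite /cons_code; apply: leq_trans (_ : (u + u).+1 <= _); first by lia.
  by rewrite leq_pmull ?expn_gt0.
by have := CodeSeq.ltn_code (a :: decode u); rewrite code_cons CodeSeq.decodeK => /andP[].
Qed.

Lemma sum_witness (P : nat -> bool) k x0 : x0 < k -> (forall x, P x = (x == x0)) ->
  \sum_(x < k) x * P x = x0 /\ 0 < \sum_(x < k) P x.
Proof.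
move=> lt_x0 P_x0.
have P_other (x : 'I_k) : x != Ordinal lt_x0 -> P x = false.
  by move=> ne_x; rewrite P_x0; apply: contraNF ne_x => /eqP eq_x; apply/eqP; exact: val_inj.
split; rewrite (bigD1 (Ordinal lt_x0)) //= P_x0 eqxx //.
by rewrite big1 ?addn0 ?muln1 // => x /P_other ->; rewrite muln0.
Qed.

Lemma cons_code_row a u0 a0 :
  (0 < \sum_(u < cons_code a0 u0) is_cons_code a u (cons_code a0 u0)) = (a == a0).
Proof.
case: (eqVneq a a0) => [->|ne_a].
  apply: (proj2 (sum_witness (P := is_cons_code a0 ^~ _) (proj2 (cons_code_gt a0 u0)) _)) => u.
  by apply/eqP/eqP => [/cons_code_inj[]|->].
rewrite big1 // => u _; rewrite /is_cons_code; case: eqP => // /cons_code_inj[eq_a _].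
by rewrite eq_a eqxx in ne_a.
Qed.

Lemma cons_code_col u a0 u0 :
  (0 < \sum_(a < cons_code a0 u0) is_cons_code a u (cons_code a0 u0)) = (u == u0).
Proof.
case: (eqVneq u u0) => [->|ne_u].
  apply: (proj2 (sum_witness (P := fun a => is_cons_code a u0 _)
                             (proj1 (cons_code_gt a0 u0)) _)) => a.
  by apply/eqP/eqP => [/cons_code_inj[]|->].
rewrite big1 // => a _; rewrite /is_cons_code; case: eqP => // /cons_code_inj[_ eq_u].
by rewrite eq_u eqxx in ne_u.
Qed.

Lemma headc_code L : headc (code L) = head 0 L.
Proof.
case: L => [|a s]; first by rewrite /headc big_ord0.
rewrite /headc code_cons.
apply: (proj1 (sum_witness (P := fun x => 0 < \sum_(u < _) is_cons_code x u _)
                           (proj1 (cons_code_gt _ _)) _)).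
by move=> x; exact: cons_code_row.
Qed.

Lemma tailc_code L : tailc (code L) = code (behead L).
Proof.
case: L => [|a s]; first by rewrite /tailc big_ord0.
rewrite /tailc code_cons.
apply: (proj1 (sum_witness (P := fun x => 0 < \sum_(a < _) is_cons_code a x _)
                           (proj2 (cons_code_gt _ _)) _)).
by move=> x; exact: cons_code_col.
Qed.

Definition consE n a u := NLet (pow2E n a) (NLet (addE n.+1 u u) (NLet (NS (NV n.+1))
  (mulE n.+3 n n.+2))).
Definition isConsE n a u t := NLet (consE n a u) (eqbE n.+1 n t).
Definition headE n t := bsumE n t (NLet (bsumE n.+2 t (isConsE n.+4 n n.+2 t))
  (NLet (sgE n.+3 n.+2) (mulE n.+4 n n.+3))).
Definition tailE n t := bsumE n t (NLet (bsumE n.+2 t (isConsE n.+4 n.+2 n t))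
  (NLet (sgE n.+3 n.+2) (mulE n.+4 n n.+3))).

Lemma evals_cons renv n a u A U : size renv = n -> natAt renv a A -> natAt renv u U ->
  evals renv (consE n a u) (cons_code A U).
Proof.
move=> size_renv renv_a renv_u.
apply: evals_let; first by apply: evals_pow2; side.
apply: evals_let; first by apply: evals_add; side.
apply: evals_let; first by apply/evals_succ/evals_var; side.
by apply: evals_mul; side.
Qed.

Lemma evals_isCons renv n a u t A U C : size renv = n ->
  natAt renv a A -> natAt renv u U -> natAt renv t C ->
  evals renv (isConsE n a u t) (is_cons_code A U C).
Proof.
move=> size_renv renv_a renv_u renv_t.
by apply: evals_let; [apply: evals_cons; side | apply: evals_eqb; side].
Qed.

Lemma evals_head renv n t c : size renv = n -> natAt renv t c -> evals renv (headE n t) (headc c).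
Proof.
move=> size_renv renv_t.
apply: (evals_bsum (G := fun a => a * (0 < \sum_(u < c) is_cons_code a u c))) => // a r _.
apply: evals_let.
  apply: (evals_bsum (G := fun u => is_cons_code a u c)); [side | side |].
  by move=> u r' _; apply: evals_isCons; side.
apply: evals_let; first by apply: evals_sg; side.
by apply: evals_mul; side.
Qed.

Lemma evals_tail renv n t c : size renv = n -> natAt renv t c -> evals renv (tailE n t) (tailc c).
Proof.
move=> size_renv renv_t.
apply: (evals_bsum (G := fun u => u * (0 < \sum_(a < c) is_cons_code a u c))) => // u r _.
apply: evals_let.
  apply: (evals_bsum (G := fun a => is_cons_code a u c)); [side | side |].
  by move=> a r' _; apply: evals_isCons; side.
apply: evals_let; first by apply: evals_sg; side.
by apply: evals_mul; side.
Qed.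

Definition prefixWeightE n l j :=
  NRec (NC 0) (NLet (NApp l (NV n)) (NS (addE n.+3 n.+1 n.+2))) (NV j).
Definition prefixCodeE n l j :=
  NRec (NC 0) (NLet (prefixWeightE n.+2 l n) (NLet (pow2E n.+3 n.+2)
  (NLet (NApp l (NV n)) (NLet (pow2E (n + 5) n.+4) (NLet (mulE (n + 6) n.+3 (n + 5))
  (addE (n + 7) n.+1 (n + 6))))))) (NV j).

Lemma evals_prefixWeight renv n l j g k : size renv = n -> funAt renv l g -> natAt renv j k ->
  evals renv (prefixWeightE n l j) (weight (mkseq g k)).
Proof.
move=> size_renv renv_l renv_j.
have -> : weight (mkseq g k) = nrec 0 (fun m r => (r + g m).+1) k.
  by elim: k {renv_j} => [//|k IHk]; rewrite mkseqS weight_rcons IHk.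
apply: evals_rec; [exact: evals_const | exact: evals_var |] => m r _.
apply: evals_let; first by apply: evals_app; [side | apply: evals_var; side].
by apply/evals_succ/evals_add; side.
Qed.

Lemma evals_prefixCode renv n l j g k : size renv = n -> funAt renv l g -> natAt renv j k ->
  evals renv (prefixCodeE n l j) (code (mkseq g k)).
Proof.
move=> size_renv renv_l renv_j.
have -> : code (mkseq g k) =
          nrec 0 (fun m r => r + 2 ^ weight (mkseq g m) * 2 ^ g m) k.
  by elim: k {renv_j} => [//|k IHk]; rewrite mkseqS code_rcons IHk.
apply: evals_rec; [exact: evals_const | exact: evals_var |] => m r _.
apply: evals_let; first by apply: evals_prefixWeight; side.
apply: evals_let; first by apply: evals_pow2; side.
apply: evals_let; first by apply: evals_app; [side | apply: evals_var; side].
apply: evals_let; first by apply: evals_pow2; side.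
apply: evals_let; first by apply: evals_mul; side.
by apply: evals_add; side.
Qed.

(* "The sequence coded by C is an initial segment of g" is decidable by a
   bounded search: its length is below C. *)
Lemma is_prefix_search g C :
  (0 < \sum_(q < C.+1) (code (mkseq g q) == C)) = (decode C == mkseq g (size (decode C))).
Proof.
apply/idP/eqP => [|prefix_C].
  case: (pickP (fun q : 'I_C.+1 => code (mkseq g q) == C)) => [q /eqP <- _ | none].
    by rewrite CodeSeq.codeK size_mkseq.
  by rewrite big1 // => q _; rewrite none.
have lt_C : size (decode C) < C.+1.
  by rewrite ltnS -{2}(CodeSeq.decodeK C) size_le_code.
by rewrite (bigD1 (Ordinal lt_C)) //= -prefix_C CodeSeq.decodeK eqxx.
Qed.

Definition isPrefixE n l ci := NLet (NS (NV ci))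
  (NLet (bsumE n.+1 n (NLet (prefixCodeE n.+3 l n.+1) (eqbE n.+4 n.+3 ci))) (sgE n.+2 n.+1)).

Lemma evals_isPrefix renv n l ci g C : size renv = n -> funAt renv l g -> natAt renv ci C ->
  evals renv (isPrefixE n l ci) (decode C == mkseq g (size (decode C))).
Proof.
move=> size_renv renv_l renv_ci; rewrite -is_prefix_search.
apply: evals_let; first by apply/evals_succ/evals_var; side.
apply: evals_let.
  apply: (evals_bsum (G := fun q => code (mkseq g q) == C)); [side | side |] => q r _.
  apply: evals_let; first by apply: evals_prefixCode; side.
  by apply: evals_eqb; side.
by apply: evals_sg; side.
Qed.

Definition satisfies (s : seq nat) (o : obj) : Prop :=
  match o with
  | O0 n => s = [::] \/ n = head 0 s
  | O1 g => s = mkseq g (size s)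
  | O2 _ => False
  end.

Definition test_val (o : obj) (C : nat) : bool :=
  match o with
  | O0 a => (C == 0) || (a == headc C)
  | O1 g => decode C == mkseq g (size (decode C))
  | O2 _ => false
  end.

Lemma test_valP o C : test_val o C <-> satisfies (decode C) o.
Proof.
case: o => [a|g|F] /=; last by [].
  rewrite -{1 2}(CodeSeq.decodeK C) headc_code code_eq0.
  by split=> [/orP[] /eqP|[] ->]; rewrite ?eqxx ?orbT; auto.
by split=> /eqP.
Qed.

Definition testE n (k : kind) l ci :=
  match k with
  | KN => NLet (iszeroE n ci) (NLet (headE n.+1 ci) (NLet (eqbE n.+2 l n.+1)
            (NLet (addE n.+3 n n.+2) (sgE n.+4 n.+3))))
  | _ => isPrefixE n l ci
  end.

Lemma evals_test renv n k l ci o C : size renv = n -> natAt renv ci C -> l < size renv ->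
  nth (O0 0) renv l = o -> in_kind k o -> evals renv (testE n k l ci) (test_val o C).
Proof.
move=> size_renv renv_ci lt_l renv_l.
case: k; case: o renv_l => [a|g|F] renv_l kind_o; try (exfalso; exact: kind_o).
- have renv_a : natAt renv l a by rewrite /natAt (set_nth_default (O0 0)).
  apply: evals_let; first by apply: evals_iszero; side.
  apply: evals_let; first by apply: evals_head; side.
  apply: evals_let; first by apply: evals_eqb; side.
  apply: evals_let; first by apply: evals_add; side.
  apply: evals_conv; last by apply: evals_sg; side.
  by rewrite /test_val; case: (C == 0); case: (a == _).
- exact: evals_isPrefix.
- exact: evals_isPrefix.
Qed.

Definition first_test (o : obj) (T : nat) : bool := (T == 0) || test_val o (headc T).

Definition firstTestE n k l t :=
  NLet (headE n t) (NLet (iszeroE n.+1 t) (NLet (testE n.+2 k l n)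
    (NLet (addE n.+3 n.+1 n.+2) (sgE n.+4 n.+3)))).

Lemma evals_firstTest renv n k l t o T : size renv = n -> natAt renv t T -> l < size renv ->
  nth (O0 0) renv l = o -> in_kind k o -> evals renv (firstTestE n k l t) (first_test o T).
Proof.
move=> size_renv renv_t lt_l renv_l kind_o.
apply: evals_let; first by apply: evals_head; side.
apply: evals_let; first by apply: evals_iszero; side.
apply: evals_let.
  apply: evals_test kind_o; [side | side | rewrite !size_rcons; lia |].
  by rewrite !nth_rcons_lt ?size_rcons //; lia.
apply: evals_let; first by apply: evals_add; side.
apply: evals_conv; last by apply: evals_sg; side.
by rewrite /first_test; case: (T == 0); case: test_val.
Qed.

Fixpoint all_tests (xs : seq obj) (T : nat) : bool :=
  if xs is o :: xs' then first_test o T && all_tests xs' (tailc T) else true.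

Fixpoint basicE n (X : space) l t acc :=
  match X with
  | [::] => NV acc
  | k :: X' => NLet (firstTestE n k l t) (NLet (mulE n.+1 acc n)
       (NLet (tailE n.+2 t) (basicE (n + 3) X' l.-1 n.+2 n.+1)))
  end.

Lemma evals_basic X xs renv n l t acc T A :
  size renv = n -> natAt renv t T -> natAt renv acc A -> in_space X xs ->
  size xs <= l.+1 -> l < size renv ->
  (forall j, j < size xs -> nth (O0 0) renv (l - j) = nth (O0 0) xs j) ->
  evals renv (basicE n X l t acc) (A * all_tests xs T).
Proof.
elim: X xs renv n l t acc T A
  => [|k X IHX] [|o xs] renv n l t acc T A size_renv renv_t renv_acc;
  [ by move=> _ _ _ _; rewrite muln1; apply: evals_var | case | case | ].
case=> kind_o X_xs size_xs lt_l renv_xs.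
apply: evals_let.
  apply: (evals_firstTest size_renv renv_t lt_l _ kind_o).
  by have := renv_xs 0 (ltn0Sn _); rewrite subn0.
apply: evals_let; first by apply: evals_mul; side.
apply: evals_let; first by apply: evals_tail; side.
apply: evals_conv; last apply: (IHX xs _ _ _ _ _ (tailc T) (A * first_test o T)) => //.
- by rewrite -mulnA mulnb.
- by side.
- by side.
- by side.
- by move: size_xs => /=; lia.
- by rewrite !size_rcons; lia.
move=> j lt_j; have -> : l.-1 - j = l - j.+1 by lia.
by rewrite !nth_rcons_lt ?size_rcons ?renv_xs //; lia.
Qed.

Lemma all_testsP xs L : all_tests xs (code L) <->
  forall i, i < size L -> i < size xs -> satisfies (decode (nth 0 L i)) (nth (O0 0) xs i).
Proof.
elim: xs L => [|o xs IHxs] L /=; first by split.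
rewrite /first_test code_eq0 tailc_code headc_code; split.
  case/andP => sat_o /IHxs sat_xs [|i] lt_i lt_i'.
    by move: sat_o {sat_xs}; case: L lt_i => //= a L _ /test_valP.
  by move: sat_xs {sat_o}; case: L lt_i => //= a L lt_i; apply.
move=> sat; apply/andP; split.
  by case: L sat => //= a L sat; apply/test_valP; exact: (sat 0).
by apply/IHxs => i; case: L sat => //= a L sat lt_i; exact: (sat i.+1).
Qed.

Lemma all_tests_basic x c : all_tests x c <-> basic_set c x.
Proof.
rewrite -(CodeSeq.decodeK c) all_testsP /basic_set /sequncode CodeSeq.codeK size_map.
by split=> sat i lt_i lt_i'; move: (sat i lt_i lt_i'); rewrite (nth_map 0) //; case: nth.
Qed.

(* The recursion theorem, by self-application: [selfApp m b] on (d :: L)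
   runs b on (<d applied to d> :: d :: L), and [fixpoint m b] is selfApp
   applied to its own index, so b receives an index for itself. *)
Definition selfApplyE n l := NLet (NC 0) (NLet (consE n.+1 l n) (NLet (NC 1)
  (NLet (consE n.+3 n.+2 n.+1) (NLet (consE n.+4 n.+3 n) (NLet (consE (n + 5) l n.+4)
  (NLet (NC 3) (consE (n + 7) (n + 6) (n + 5)))))))).

Lemma evals_selfApply renv n l D : size renv = n -> natAt renv l D ->
  evals renv (selfApplyE n l) (iComp D (iConst D)).
Proof.
move=> size_renv renv_l.
do 7 (apply: evals_let; first by [apply: evals_const | apply: evals_cons; side]).
apply: evals_conv; last by apply: evals_cons; side.
by rewrite /iComp /iConst /seqcode !code_cons.
Qed.

Definition selfApp (m b : nat) : nat :=
  iComp (iComp (iUniv m.+2) (iConst b)) (compile m.+1 (selfApplyE m.+1 m)).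
Definition fixpoint (m b : nat) : nat := iComp (selfApp m b) (iConst (selfApp m b)).

Theorem recursion_theorem m b L n : size L = m ->
  Comp b (O0 (fixpoint m b) :: O0 (selfApp m b) :: L) n -> Comp (fixpoint m b) L n.
Proof.
move=> size_L Cb; apply: comp_comp; first exact: comp_const.
apply: comp_comp.
  apply: (evals_comp (renv := rcons (rev L) (O0 (selfApp m b)))).
  - apply: evals_selfApply; first by rewrite size_rcons size_rev size_L.
    by apply: natAt_last; rewrite ?size_rev.
  - by rewrite rev_rcons revK.
  - by rewrite size_rcons size_rev size_L.
apply: comp_comp; first exact: comp_const.
by apply: comp_univ_all Cb; rewrite /= size_L.
Qed.

Definition chi (P : Prop) : nat := if excluded_middle_informative P then 1 else 0.

Lemma chi_true (P : Prop) : P -> chi P = 1.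
Proof. by rewrite /chi; case: excluded_middle_informative. Qed.

Lemma chi_false (P : Prop) : ~ P -> chi P = 0.
Proof. by rewrite /chi; case: excluded_middle_informative. Qed.

Lemma chi_bool (b : bool) (P : Prop) : (b <-> P) -> chi P = b.
Proof.
by case: b => bP; [apply: chi_true; apply/bP | apply: chi_false => /bP].
Qed.

Lemma chi_not (P : Prop) : chi (~ P) = (chi P == 0).
Proof. by rewrite /chi; do 2 case: excluded_middle_informative => //; tauto. Qed.

Lemma suslin_chi (P : seq nat -> Prop) :
  SuslinS (fun m => chi (P (decode m))) = chi (exists h, forall n, P (fbar h n)).
Proof.
rewrite /SuslinS; case: excluded_middle_informative => [bar_P|not_bar_P].
  symmetry; apply: chi_false => -[h Ph]; case: (bar_P h) => n.
  by rewrite /seqcode CodeSeq.codeK chi_true.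
symmetry; apply: chi_true; apply: NNPP => no_branch; apply: not_bar_P => h.
apply: NNPP => no_n; apply: no_branch; exists h => n.
by apply: NNPP => not_P; apply: no_n; exists n; rewrite /seqcode CodeSeq.codeK chi_false.
Qed.

(* The main program runs on the environment
     Env = [q; d; c; w; F; f; x_0; ...; x_(K-1)]
   where q is an index for the program itself, d the auxiliary index of the
   recursion theorem, c = <s> the code of the current node s of the tree and
   w its weight, F the type-2 argument (S), f the code and x the point. *)
Definition Env q d c w F f (x : seq obj) : seq obj :=
  [:: O0 q, O0 d, O0 c, O0 w, O2 F, O1 f & x].
Definition REnv q d c w F f (x : seq obj) : seq obj :=
  rev x ++ [:: O1 f; O2 F; O0 w; O0 c; O0 d; O0 q].

Section Environment.
Variables (q d c w : nat) (F : (nat -> nat) -> nat) (f : nat -> nat) (x : seq obj).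

Lemma Env_rev : Env q d c w F f x = rev (REnv q d c w F f x).
Proof. by rewrite /REnv rev_cat revK. Qed.

Lemma size_REnv : size (REnv q d c w F f x) = size x + 6.
Proof. by rewrite /REnv size_cat size_rev. Qed.

Lemma REnv_f : funAt (REnv q d c w F f x) (size x) f.
Proof. by rewrite /funAt /REnv nth_cat size_rev ltnn subnn. Qed.

Lemma REnv_c : natAt (REnv q d c w F f x) (size x + 3) c.
Proof. by rewrite /natAt /REnv nth_cat size_rev ltnNge leq_addr /= addKn. Qed.

Lemma REnv_x j : j < size x ->
  nth (O0 0) (REnv q d c w F f x) ((size x).-1 - j) = nth (O0 0) x j.
Proof.
by move=> lt_j; rewrite /REnv nth_cat size_rev ifT ?nth_rev; [congr nth | |]; lia.
Qed.

End Environment.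

Definition labelE K := NApp K (NV (K + 3)).

Lemma evals_label q d c w F f x :
  evals (REnv q d c w F f x) (labelE (size x)) (f c).
Proof. by apply: evals_app; [exact: REnv_f | apply: evals_var; exact: REnv_c]. Qed.

Definition leafE (X : space) := let K := size X in
  NLet (labelE K) (NLet (div3E (K + 7) (K + 6))
    (NLet (NC 1) (basicE (K + 9) X K.-1 (K + 7) (K + 8)))).

Lemma in_space_size X x : in_space X x -> size x = size X.
Proof. by elim: X x => [|k X IHX] [|o x] //= [_ /IHX ->]. Qed.

Lemma leaf_ok X q d c w F f x : in_space X x ->
  Comp (compile (size X + 6) (leafE X)) (Env q d c w F f x) (chi (basic_set (f c %/ 3) x)).
Proof.
move=> X_x; rewrite /leafE -(in_space_size X_x).
apply: (evals_comp (renv := REnv q d c w F f x)); [|exact: Env_rev|exact: size_REnv].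
have size_renv := size_REnv q d c w F f x.
apply: evals_let; first exact: evals_label.
apply: evals_let; first by apply: evals_div3; side.
apply: evals_let; first exact: evals_const.
apply: evals_conv; last apply: (evals_basic (xs := x) (T := f c %/ 3) (A := 1)) X_x _ _ _;
  try side.
- by rewrite mul1n; symmetry; apply: chi_bool; exact: all_tests_basic.
move=> j lt_j; rewrite !nth_rcons_lt ?size_rcons ?size_renv; try lia.
exact: REnv_x.
Qed.

(* Calling the program on a child s ++ [m] of the current node: its code is
   c + 2^w * 2^m and its weight (w + m) + 1 (code_rcons, weight_rcons).  The
   index [callIdx] expects [F; f; x; m; q; d; c; w]; [childIdx] expects the
   layout [F; m; q; d; c; w; f; x] produced by the scheme S8. *)
Definition childWeightE K := NS (addE (K + 7) 0 4).
Definition childCodeE K := NLet (pow2E (K + 8) 0) (NLet (pow2E (K + 9) 4)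
  (NLet (mulE (K + 10) (K + 8) (K + 9)) (addE (K + 11) 1 (K + 10)))).
Definition callIdx K := iComp (iComp (imove (K + 5) (iUniv (K + 4)))
  (compile (K + 8) (childCodeE K))) (compile (K + 7) (childWeightE K)).
Definition childIdx K := irot 6 (K + 1) (imove (K + 1) (callIdx K)).

Definition child_args c w m (F : (nat -> nat) -> nat) f (x : seq obj) : seq obj :=
  [:: O0 (c + 2 ^ w * 2 ^ m), O0 (w + m).+1, O2 F, O1 f & x].

Lemma call_ok q d c w m F f x r : Comp q (child_args c w m F f x) r ->
  Comp (callIdx (size x)) ([:: O2 F, O1 f & x] ++ [:: O0 m; O0 q; O0 d; O0 c; O0 w]) r.
Proof.
move=> Cq; set T := [:: O2 F, O1 f & x].
set renv := [:: O0 w; O0 c; O0 d; O0 q; O0 m] ++ rev T.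
have size_renv : size renv = size x + 7 by rewrite size_cat size_rev /=; lia.
have rev_renv : T ++ [:: O0 m; O0 q; O0 d; O0 c; O0 w] = rev renv by rewrite rev_cat revK.
apply: comp_comp.
  apply: (evals_comp (renv := renv)) => //.
  by apply/evals_succ/evals_add.
apply: comp_comp.
  apply: (evals_comp (renv := rcons renv (O0 (w + m).+1))).
  - apply: evals_let; first by apply: evals_pow2; [side | exact: natAt_rcons].
    apply: evals_let; first by apply: evals_pow2; [side | do 2 apply: natAt_rcons].
    apply: evals_let; first by apply: evals_mul; side.
    by apply: evals_add; [side | do 4 apply: natAt_rcons | side].
  - by rewrite rev_rcons -rev_renv.
  - by rewrite size_rcons size_renv; lia.
have -> : [:: O0 (c + 2 ^ w * 2 ^ m), O0 (w + m).+1 & T ++ [:: O0 m; O0 q; O0 d; O0 c; O0 w]]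
  = (child_args c w m F f x ++ [:: O0 m]) ++ O0 q :: [:: O0 d; O0 c; O0 w] by rewrite -catA.
have -> : size x + 5 = size (child_args c w m F f x ++ [:: O0 m]) by rewrite size_cat /=; lia.
apply: comp_imove; rewrite -catA; apply: comp_univ Cq.
by rewrite /=; lia.
Qed.

Lemma child_ok q d c w m F f x r : Comp q (child_args c w m F f x) r ->
  Comp (childIdx (size x)) [:: O2 F, O0 m, O0 q, O0 d, O0 c, O0 w, O1 f & x] r.
Proof.
move=> Cq; rewrite /childIdx (_ : size x + 1 = size (O1 f :: x)) ?addn1 //.
have := comp_irot (P := [:: O2 F; O0 m; O0 q; O0 d; O0 c; O0 w]) (T := O1 f :: x) (R := [::]).
rewrite !cats0; apply; rewrite -[size x]/(size (O1 f :: x)).-1.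
apply: (comp_imove (pre := O1 f :: x)); exact: call_ok Cq.
Qed.

Definition complIdx K := iComp (compile (K + 7) (iszeroE (K + 7) (K + 6)))
                               (iComp (imove 5 (childIdx K)) (iConst 0)).

Lemma compl_ok K q d c w F f x r : size x = K -> Comp q (child_args c w 0 F f x) r ->
  Comp (complIdx K) (Env q d c w F f x) (r == 0).
Proof.
move=> <- Cq; apply: comp_comp.
  apply: comp_comp; first exact: comp_const.
  exact: (comp_imove (pre := [:: O0 0; O0 q; O0 d; O0 c; O0 w])) (child_ok d Cq).
apply: (evals_comp (renv := rcons (REnv q d c w F f x) (O0 r))).
- apply: evals_iszero; first by rewrite size_rcons size_REnv; lia.
  by apply: natAt_last; rewrite ?size_REnv.
- by rewrite rev_rcons -Env_rev.
- by rewrite size_rcons size_REnv; lia.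
Qed.

Definition suslinIdx K := imove 4 (iApp2 (childIdx K)).

Lemma suslin_branch_ok K q d c w F f x (g : nat -> nat) : size x = K ->
  (forall m, Comp q (child_args c w m F f x) (g m)) ->
  Comp (suslinIdx K) (Env q d c w F f x) (F g).
Proof.
move=> <- Cq; apply: (comp_imove (pre := [:: O0 q; O0 d; O0 c; O0 w])).
by apply: comp_app2 => m; exact: child_ok.
Qed.

Definition branchE K b0 b1 b2 :=
  NLet (labelE K) (NLet (mod3E (K + 7) (K + 6)) (case3E (K + 8) (K + 7) b0 b1 b2)).
Definition body (X : space) := let K := size X in
  iComp (iUniv (K + 6))
        (compile (K + 6) (branchE K (compile (K + 6) (leafE X)) (complIdx K) (suslinIdx K))).

Lemma body_ok X q d c w F f x r : size x = size X ->
  Comp (case3 (f c %% 3) (compile (size X + 6) (leafE X)) (complIdx (size X))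
               (suslinIdx (size X))) (Env q d c w F f x) r ->
  Comp (body X) (Env q d c w F f x) r.
Proof.
move=> size_x Cbranch; rewrite /body -size_x in Cbranch *; apply: comp_comp.
  apply: (evals_comp (renv := REnv q d c w F f x)); [|exact: Env_rev|exact: size_REnv].
  have size_renv := size_REnv q d c w F f x.
  apply: evals_let; first exact: evals_label.
  apply: evals_let; first by apply: evals_mod3; side.
  by apply: evals_case3; side.
by apply: comp_univ_all Cbranch; rewrite /Env /=; lia.
Qed.

Definition progIdx (X : space) : nat := fixpoint (size X + 4) (body X).

Lemma node_ok X f s P : Interp f s P -> forall x, in_space X x ->
  Comp (progIdx X) [:: O0 (seqcode s), O0 (weight s), O2 SuslinS, O1 f & x] (chi (P x)).
Proof.
elim=> {s P} [s label_s | s Q label_s _ IHQ | s P label_s _ IHP] x X_x;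
  have size_x := in_space_size X_x;
  (apply: recursion_theorem; first by rewrite /= size_x; lia);
  (* select the branch by reducing [case3] only, never the indices themselves *)
  apply: body_ok => //; rewrite label_s /case3; cbv beta iota.
- exact: leaf_ok X_x.
- rewrite chi_not; apply: compl_ok size_x _.
  by have := IHQ x X_x; rewrite /seqcode code_rcons weight_rcons.
- have -> : chi (Aop P x) = SuslinS (fun m => chi (P (decode m) x)).
    by rewrite (suslin_chi (P^~ x)).
  apply: suslin_branch_ok size_x _ => m; have := IHP (decode m) x X_x.
  by rewrite /seqcode code_rcons weight_rcons CodeSeq.decodeK.
Qed.

(* The main index pushes the code 0 and weight 0 of the root and calls the
   program. *)
Definition mainIdx (X : space) : nat :=
  iComp (iComp (iComp (iUniv (size X + 4)) (iConst (progIdx X))) (iConst 0)) (iConst 0).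

Theorem mainTheorem3 :
  forall X : space, exists e : nat,
    forall (f : nat -> nat) (Pf : seq obj -> Prop), Interp f [::] Pf ->
    forall x : seq obj, in_space X x ->
      (Pf x -> Comp e (O2 SuslinS :: O1 f :: x) 1) /\
      (~ Pf x -> Comp e (O2 SuslinS :: O1 f :: x) 0).
Proof.
move=> X; exists (mainIdx X) => f Pf code_f x X_x.
have Cmain : Comp (mainIdx X) [:: O2 SuslinS, O1 f & x] (chi (Pf x)).
  do 3 (apply: comp_comp; first exact: comp_const).
  by apply: comp_univ_all (node_ok code_f X_x); rewrite /= (in_space_size X_x); lia.
by split=> Pf_x; [rewrite -(chi_true Pf_x) | rewrite -(chi_false Pf_x)].
Qed.
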